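(* A system $C=(1,c_2,c_3,c_4,2c_4-c_2)$ is canonical and its subsystem $(1,c_2,c_3,c_4)$ is noncanonical if and only if $C=(1,2,c_3,c_3+1,2c_3)$ and $c_3>3$.
   Context: A system is a tuple $C=(c_1,\dots,c_n)$ of integers with $1=c_1<c_2<\dots<c_n$; for $k\le n$, $(c_1,\dots,c_k)$ is a subsystem. For a positive integer $v$, $\mathrm{opt}_C(v)$ is the minimum of $\sum_i x_i$ over $x\in\mathbb{Z}_{\ge0}^n$ with $\sum_i c_ix_i=v$. The greedy representation of $v$ is produced by: for $i=n$ down to $1$, while $c_i\le$ remaining value, take a coin $c_i$. $\mathrm{grd}_C(v)$ is its number of coins. A positive integer $w$ is a counterexample if $\mathrm{opt}_C(w)<\mathrm{grd}_C(w)$; $C$ is canonical if it has none, noncanonical otherwise. *)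

From mathcomp Require Import all_boot.
Set Implicit Arguments. Unset Strict Implicit. Unset Printing Implicit Defensive.

Definition is_system (C : seq nat) : Prop :=
  head 0 C = 1 /\ sorted ltn C.

Definition is_rep (C : seq nat) (x : seq nat) (v : nat) : Prop :=
  size x = size C /\ \sum_(i < size C) nth 0 C i * nth 0 x i = v.

Fixpoint grd_aux (Crev : seq nat) (v : nat) : nat :=
  match Crev with
  | [::] => 0
  | c :: cs => if c == 0 then grd_aux cs v else v %/ c + grd_aux cs (v %% c)
  end.
Definition grd (C : seq nat) (v : nat) : nat := grd_aux (rev C) v.

(* opt_C(w) < grd_C(w), with opt the minimum of sum x over representations:
   equivalently some representation uses fewer coins than greedy. *)
Definition counterexample (C : seq nat) (w : nat) : Prop :=
  0 < w /\ exists x, is_rep C x w /\ sumn x < grd C w.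

Definition canonical (C : seq nat) : Prop := forall w, ~ counterexample C w.

From mathcomp Require Import all_boot zify.
From Stdlib Require Import Classical.

(* If C = (1, 2, c, c + 1, 2c) with c > 3, adding any coin to a value raises
   the greedy count by at most one, so greedy never loses; in (1, 2, c, c + 1)
   the value 2c = c + c beats greedy, which starts with c + 1.
   Conversely, take a minimal counterexample w of S = (1, a, b, d) and a
   representation y beating greedy. Greedy on w starts with d, so y avoids d,
   and the Kozen-Zaks exchange gives w < d + c for every coin c used by y.
   Canonicity of (1, a, b, d, 2d - a) forces w >= 2d - a and, at the value
   b + d, a + b <= d + 1.
   Only y = (0, 0, 2, 0) survives, with a = 2 and d = b + 1; b = 3 is ruled out as
   (1, 2, 3, 4) is canonical at 6. *)

Definition amount (C x : seq nat) : nat := sumn [seq p.1 * p.2 | p <- zip C x].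

Lemma sum_nth_mul_zip (C x : seq nat) : size x = size C ->
  \sum_(i < size C) nth 0 C i * nth 0 x i = amount C x.
Proof.
elim: C x => [|c C IH] [|x0 x] //=; first by rewrite big_ord0.
by move=> [eq_size]; rewrite big_ord_recl IH.
Qed.

Lemma is_repE (C x : seq nat) (v : nat) :
  is_rep C x v <-> size x = size C /\ amount C x = v.
Proof.
rewrite /is_rep; split=> -[eq_size <-]; by rewrite sum_nth_mul_zip.
Qed.

Lemma is_rep_rcons (C x : seq nat) (c k v : nat) :
  is_rep C x v -> is_rep (rcons C c) (rcons x k) (v + c * k).
Proof.
move=> /is_repE[eq_size <-]; apply/is_repE.
by rewrite !size_rcons eq_size /amount zip_rcons // map_rcons sumn_rcons.
Qed.

Lemma amount_cons (C x : seq nat) (c x0 : nat) :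
  amount (c :: C) (x0 :: x) = c * x0 + amount C x.
Proof. by []. Qed.

Lemma is_rep_addcoin {C x : seq nat} {c v : nat} : c \in C -> is_rep C x v ->
  exists2 x', is_rep C x' (v + c) & sumn x' = (sumn x).+1.
Proof.
elim: C x v => [|c0 C IH] x v //.
case: x => [|x0 x] c_in /is_repE[//= [eq_size] <-].
rewrite inE in c_in; case: (eqVneq c c0) c_in => [-> _|_ /= c_in_C].
  exists (x0.+1 :: x); last by rewrite /= addSn.
  by apply/is_repE; rewrite /= !amount_cons eq_size mulnS; split=> //; lia.
have [|x' /is_repE[size_x' amount_x'] sum_x'] := IH x (amount C x) c_in_C.
  exact/is_repE.
exists (x0 :: x'); last by rewrite /= sum_x' addnS.
by apply/is_repE; rewrite /= !amount_cons amount_x' size_x' addnA.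
Qed.

Lemma grd0 (C : seq nat) : grd C 0 = 0.
Proof. by rewrite /grd; elim: (rev C) => //= c Cr; rewrite div0n mod0n => ->; case: eqP. Qed.

(* No positivity hypothesis: [v %/ 0 = 0] and [v %% 0 = v]. *)
Lemma grd_rcons (C : seq nat) (c v : nat) :
  grd (rcons C c) v = v %/ c + grd C (v %% c).
Proof.
rewrite /grd rev_rcons /=; case: eqP => [->|//].
by rewrite divn0 modn0.
Qed.

Lemma grd_rcons_small (C : seq nat) (c v : nat) :
  v < c -> grd (rcons C c) v = grd C v.
Proof. by move=> lt_vc; rewrite grd_rcons divn_small // modn_small. Qed.

Lemma grd_rcons_addn (C : seq nat) (c v : nat) :
  0 < c -> grd (rcons C c) (v + c) = (grd (rcons C c) v).+1.
Proof.
move=> c_gt0; rewrite !grd_rcons divnDr // divnn c_gt0 modnDr.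
by rewrite addn1 addSn.
Qed.

Lemma grd_rcons_addn_mul (C : seq nat) (c v q : nat) :
  0 < c -> grd (rcons C c) (v + q * c) = grd (rcons C c) v + q.
Proof.
move=> c_gt0; elim: q => [|q IH]; first by rewrite !addn0.
by rewrite mulSn addnA addnAC grd_rcons_addn // IH addnS.
Qed.

Lemma grd_1 (v : nat) : grd [:: 1] v = v.
Proof. by rewrite /grd /= divn1 addn0. Qed.

Lemma grd_rep (C : seq nat) (v : nat) :
  exists2 x, is_rep (1 :: C) x v & sumn x = grd (1 :: C) v.
Proof.
elim/last_ind: C v => [|C c IH] v.
  by exists [:: v]; [apply/is_repE; rewrite /amount /= mul1n addn0 | rewrite grd_1 /= addn0].
have [x rep_x sum_x] := IH (v %% c).
exists (rcons x (v %/ c)); last by rewrite -rcons_cons grd_rcons sumn_rcons sum_x addnC.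
rewrite -rcons_cons {2}(divn_eq v c) addnC mulnC.
exact: is_rep_rcons.
Qed.

Lemma grd_le_rep {C x : seq nat} {v : nat} :
  ~ counterexample C v -> is_rep C x v -> grd C v <= sumn x.
Proof.
move=> not_cex rep_x; case: (posnP v) => [->|v_gt0]; first by rewrite grd0.
by rewrite leqNgt; apply/negP => lt_sum; apply: not_cex; split=> //; exists x.
Qed.

Lemma minimal_counterexample (C : seq nat) : ~ canonical C ->
  exists w, counterexample C w /\ forall v, v < w -> ~ counterexample C v.
Proof.
move=> /not_all_not_ex[w0]; elim/ltn_ind: w0 => w IH cex_w.
case: (classic (exists2 v, v < w & counterexample C v)) => [[v lt_vw /IH]|]; first exact.
by move=> no_smaller; exists w; split=> // v lt_vw cex_v; apply: no_smaller; exists v.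
Qed.

Section GreedyIncrements.

Variable C : seq nat.
Hypothesis grd_addcoin : forall k v, k \in C -> grd C (v + k) <= (grd C v).+1.

Lemma grd_addn_mul (k n v : nat) : k \in C -> grd C (v + k * n) <= grd C v + n.
Proof.
move=> k_in_C; elim: n => [|n IH]; first by rewrite muln0 !addn0.
rewrite mulnS [k + _]addnC addnA addnS; exact: leq_trans (grd_addcoin _ _ k_in_C) _.
Qed.

Lemma grd_addn_amount (D x : seq nat) (v : nat) : {subset D <= C} ->
  grd C (v + amount D x) <= grd C v + sumn x.
Proof.
elim: D x v => [|c D IH] [|x0 x] v sub_DC; try by rewrite /amount /= addn0 leq_addr.
have c_in_C : c \in C by apply: sub_DC; rewrite mem_head.
have sub_D : {subset D <= C} by move=> k k_in; apply: sub_DC; rewrite inE k_in orbT.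
rewrite amount_cons addnA /= addnA; apply: leq_trans (IH x _ sub_D) _.
by rewrite leq_add2r grd_addn_mul.
Qed.

Lemma canonical_of_grd_addcoin : canonical C.
Proof.
move=> w [_ [x [/is_repE[_ <-]]]]; apply/negP; rewrite -leqNgt.
by have := grd_addn_amount C x 0 (fun k => id); rewrite grd0 !add0n.
Qed.

End GreedyIncrements.

Section MinimalCounterexample.

Variables (C : seq nat) (d w : nat).
Local Notation T := (rcons (1 :: C) d).
Hypotheses (d_gt0 : 0 < d) (w_min : forall v, v < w -> ~ counterexample T v).

Lemma grd_le_drop_top (z : seq nat) :
  d <= w -> is_rep T z (w - d) -> grd T w <= (sumn z).+1.
Proof.
move=> le_dw rep_z; rewrite -(subnK le_dw) grd_rcons_addn // ltnS.
by apply: grd_le_rep rep_z; apply: w_min; lia.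
Qed.

Lemma grd_le_drop_coin (c : nat) (z : seq nat) : 0 < c -> c \in T -> d + c <= w ->
  is_rep T z (w - c) -> grd T w <= (sumn z).+1.
Proof.
move=> c_gt0 c_in_T le_dcw rep_z.
(* Greedy takes d first from both w and w - c, and adding c to a greedy
   representation of w - d - c represents w - d. *)
have [x rep_x sum_x] := grd_rep (rcons C d) (w - d - c).
have [x' rep_x' sum_x'] := is_rep_addcoin c_in_T rep_x.
rewrite subnK in rep_x'; last by lia.
have grd_w_d : grd T (w - d) <= (grd T (w - d - c)).+1.
  by rewrite -sum_x -sum_x'; apply: grd_le_rep rep_x'; apply: w_min; lia.
have grd_w_c : grd T (w - c) = (grd T (w - d - c)).+1.
  by rewrite -grd_rcons_addn // subnAC subnK //; lia.
rewrite -(@subnK d w) ?grd_rcons_addn ?ltnS //; last lia.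
rewrite (leq_trans grd_w_d) // -grd_w_c.
by apply: grd_le_rep rep_z; apply: w_min; lia.
Qed.

End MinimalCounterexample.

Section OneTwoC.

Variable c : nat.
Hypothesis c_gt3 : 3 < c.
Local Notation H := [:: 1; 2; c; c + 1].
Local Notation G := [:: 1; 2; c; c + 1; 2 * c].

Lemma grd_1_2 (v : nat) : grd [:: 1; 2] v = (v + 1) %/ 2.
Proof. by rewrite (grd_rcons [:: 1]) grd_1; lia. Qed.

Lemma grd_H (r : nat) : r <= 2 * c ->
  grd H r = if r < c then (r + 1) %/ 2 else (r - c) %/ 2 + 1.
Proof.
move=> le_r2c; case: ltnP => [lt_rc|le_cr].
  by rewrite (grd_rcons_small [:: 1; 2; c]) ?(grd_rcons_small [:: 1; 2]) ?grd_1_2 //; lia.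
case: (ltnP r (c + 1)) => [lt_rc1|le_c1r].
  have -> : r = 0 + c by lia.
  by rewrite (grd_rcons_small [:: 1; 2; c]) ?(grd_rcons_addn [:: 1; 2]) ?grd0; lia.
rewrite -(subnK le_c1r) (grd_rcons_addn [:: 1; 2; c]) ?(grd_rcons_small [:: 1; 2; c])
  ?(grd_rcons_small [:: 1; 2]) ?grd_1_2; lia.
Qed.

Lemma grd_H_addcoin (r k : nat) : r < 2 * c -> k \in H ->
  if r + k < 2 * c then grd H (r + k) <= (grd H r).+1 else grd H (r + k - 2 * c) <= grd H r.
Proof.
move=> lt_r2c; rewrite !inE => /or4P[] /eqP-> /=; case: ltnP => ?;
  rewrite !grd_H; try lia; by case: ltnP => ?; case: ltnP => ?; lia.
Qed.

Lemma grd_G_addcoin (k v : nat) : k \in G -> grd G (v + k) <= (grd G v).+1.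
Proof.
have c2_gt0 : 0 < 2 * c by lia.
rewrite -[G]/(rcons H (2 * c)) mem_rcons inE => /predU1P[->|k_in_H].
  by rewrite grd_rcons_addn.
have lt_r2c : v %% (2 * c) < 2 * c by rewrite ltn_mod.
rewrite {1 2}(divn_eq v (2 * c)) -addnA ![_ * _ + _]addnC !grd_rcons_addn_mul //.
rewrite -addSn leq_add2r (grd_rcons_small _ _ _ lt_r2c).
move: (grd_H_addcoin _ _ lt_r2c k_in_H); case: ltnP => [lt_rk|le_rk] grd_H_le.
  by rewrite grd_rcons_small.
have lt_k2c : k < 2 * c by move: k_in_H; rewrite !inE => /or4P[] /eqP->; lia.
by rewrite -(subnK le_rk) grd_rcons_addn // grd_rcons_small //; lia.
Qed.

Lemma canonical_G : canonical G.
Proof. exact/canonical_of_grd_addcoin/grd_G_addcoin. Qed.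

Lemma not_canonical_H : ~ canonical H.
Proof.
move=> H_can; apply: (H_can (2 * c)); split; first lia.
exists [:: 0; 0; 2; 0]; split; first by apply/is_repE; rewrite /amount /=; split=> //; lia.
have -> : 2 * c = (c - 1) + (c + 1) by lia.
rewrite -[H]/(rcons [:: 1; 2; c] (c + 1)) grd_rcons_addn; last lia.
by rewrite /= grd_H; [case: (ltnP (c - 1) c) => ? |]; lia.
Qed.

End OneTwoC.

Section ExtensionOfFourCoins.

Context {a b d : nat}.
Hypotheses (a_gt1 : 1 < a) (lt_ab : a < b) (lt_bd : b < d).
Local Notation S := [:: 1; a; b; d].
Local Notation C := [:: 1; a; b; d; 2 * d - a].

Lemma is_rep_S (x1 x2 x3 x4 : nat) :
  is_rep S [:: x1; x2; x3; x4] (x1 + a * x2 + b * x3 + d * x4).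
Proof. by apply/is_repE; rewrite /amount /=; split=> //; lia. Qed.

Lemma grd_S_small (v : nat) : v < a -> grd S v = v.
Proof.
move=> lt_va; rewrite (grd_rcons_small [:: 1; a; b]) ?(grd_rcons_small [:: 1; a])
  ?(grd_rcons_small [:: 1]) ?grd_1 //; lia.
Qed.

Lemma canonical_C_ab_le : canonical C -> d <= a + b -> a + b <= d.+1.
Proof.
move=> C_can le_dab.
(* Greedy pays b + d with the coin 2d - a and then a + b - d ones. *)
have rep_bd : is_rep C [:: 0; 0; 1; 1; 0] (b + d).
  by apply/is_repE; rewrite /amount /=; split=> //; lia.
have := grd_le_rep (C_can _) rep_bd.
have -> : b + d = (a + b - d) + (2 * d - a) by lia.
rewrite (grd_rcons_addn S) ?(grd_rcons_small S) ?grd_S_small /=; lia.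
Qed.

Section MinimalCounterexampleOfS.

Context {w y1 y2 y3 y4 : nat}.
Hypotheses (C_can : canonical C) (w_min : forall v, v < w -> ~ counterexample S v)
  (w_eq : w = y1 + a * y2 + b * y3 + d * y4) (y_lt : y1 + y2 + y3 + y4 < grd S w).

Lemma cex_ge_last_coin : 2 * d - a <= w.
Proof.
rewrite leqNgt; apply/negP => lt_we.
have rep_y : is_rep C [:: y1; y2; y3; y4; 0] w.
  by rewrite w_eq; apply/is_repE; rewrite /amount /=; split=> //; lia.
by have := grd_le_rep (C_can w) rep_y; rewrite (grd_rcons_small S) //=; lia.
Qed.

Let d_gt0 : 0 < d. Proof. lia. Qed.

Lemma cex_lt_top_add_coin (c x1 x2 x3 x4 : nat) : 0 < c -> c \in S ->
  w = x1 + a * x2 + b * x3 + d * x4 + c -> (x1 + x2 + x3 + x4).+1 = y1 + y2 + y3 + y4 ->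
  w < d + c.
Proof.
move=> c_gt0 c_in_S w_eq' sum_eq; rewrite ltnNge; apply/negP => le_dcw.
have rep_z : is_rep S [:: x1; x2; x3; x4] (w - c) by rewrite w_eq' addnK; apply: is_rep_S.
have := grd_le_drop_coin [:: a; b] d w d_gt0 w_min c _ c_gt0 c_in_S le_dcw rep_z.
by rewrite /=; lia.
Qed.

Lemma cex_y4_eq0 : y4 = 0.
Proof.
case: (posnP y4) => // y4_gt0; exfalso.
have rep_z : is_rep S [:: y1; y2; y3; y4.-1] (w - d).
  have d_y4 : d * y4 = d * y4.-1 + d by rewrite -mulnSr prednK.
  by rewrite w_eq d_y4 addnA addnK; apply: is_rep_S.
have := grd_le_drop_top [:: a; b] d w d_gt0 w_min _ _ rep_z.
by move: (prednK y4_gt0) (leq_pmulr d y4_gt0) => /=; lia.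
Qed.

Lemma cex_y1_eq0 : y1 = 0.
Proof.
case: (posnP y1) => // y1_gt0; exfalso.
have lt_w : w < d + 1.
  by apply: (@cex_lt_top_add_coin 1 (y1 - 1) y2 y3 y4); rewrite ?mem_head //; lia.
by have := cex_ge_last_coin; lia.
Qed.

Lemma cex_y2_eq0 : y2 = 0.
Proof.
case: (posnP y2) => // y2_gt0; exfalso.
have a_y2 : a * y2 = a * y2.-1 + a by rewrite -mulnSr prednK.
have lt_w : w < d + a.
  apply: (@cex_lt_top_add_coin a y1 y2.-1 y3 y4); rewrite ?inE ?eqxx ?orbT //;
    move: (prednK y2_gt0); lia.
by have := canonical_C_ab_le C_can; have := cex_ge_last_coin; lia.
Qed.

Lemma cex_shape : a = 2 /\ d = b + 1 /\ w = 2 * b.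
Proof.
have w_eq_b : w = b * y3 by rewrite w_eq cex_y1_eq0 cex_y2_eq0 cex_y4_eq0; lia.
have y3_gt0 : 0 < y3.
  case: (posnP y3) => // y3_0; have := y_lt.
  by rewrite w_eq_b y3_0 muln0 grd0.
have b_y3 : b * y3 = b * y3.-1 + b by rewrite -mulnSr prednK.
have lt_w : w < d + b.
  apply: (@cex_lt_top_add_coin b 0 0 y3.-1 0); rewrite ?inE ?eqxx ?orbT //;
    move: (prednK y3_gt0) cex_y1_eq0 cex_y2_eq0 cex_y4_eq0; lia.
have le_dab : d <= a + b by move: cex_ge_last_coin; lia.
have y3_lt3 : y3 < 3.
  by rewrite ltnNge -(@leq_pmul2l b); lia.
have [y3E|y3E] : y3 = 1 \/ y3 = 2 by lia.
all: rewrite y3E in w_eq_b; move: cex_ge_last_coin (canonical_C_ab_le C_can le_dab); lia.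
Qed.

End MinimalCounterexampleOfS.

Lemma canonical_extension_shape : canonical C -> ~ canonical S -> a = 2 /\ d = b + 1 /\ 3 < b.
Proof.
move=> C_can /minimal_counterexample[w [[_ [y [/is_repE[size_y amount_y] y_lt]]] w_min]].
case: y size_y amount_y y_lt => [|y1 [|y2 [|y3 [|y4 []]]]] // _ amount_y y_lt.
have w_eq : w = y1 + a * y2 + b * y3 + d * y4 by rewrite -amount_y /amount /=; lia.
rewrite /= addn0 !addnA in y_lt.
have [a2 [d_b w_2b]] := cex_shape C_can w_min w_eq y_lt.
split=> //; split=> //; rewrite ltnNge; apply/negP => le_b3.
have b3 : b = 3 by lia.
have grd_6 : grd [:: 1; 2; 3; 3 + 1] (2 * 3) = 2 by [].
by move: y_lt w_eq; rewrite w_2b a2 d_b b3 grd_6; lia.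
Qed.

End ExtensionOfFourCoins.

Theorem corollary3 (c2 c3 c4 : nat) :
  is_system [:: 1; c2; c3; c4; 2 * c4 - c2] ->
  (canonical [:: 1; c2; c3; c4; 2 * c4 - c2] /\ ~ canonical [:: 1; c2; c3; c4]
   <-> [:: 1; c2; c3; c4; 2 * c4 - c2] = [:: 1; 2; c3; c3 + 1; 2 * c3] /\ 3 < c3).
Proof.
move=> [_ /= /and5P[gt1_c2 lt_c2_c3 lt_c3_c4 _ _]]; split.
  move=> [C_can S_not_can].
  have [-> [-> gt3_c3]] := canonical_extension_shape gt1_c2 lt_c2_c3 lt_c3_c4 C_can S_not_can.
  by rewrite mulnDr muln1 addnK.
move=> [[-> -> ->] gt3_c3].
by split; [apply: canonical_G | apply: not_canonical_H].
Qed.
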